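(* Let $\mathsf{Op}$ be an operational theory and $\widetilde{\mathsf{Op}}$ its associated GPT, with quotient map $\sim:\mathsf{Op}\to\widetilde{\mathsf{Op}}$, $T\mapsto\widetilde T$. Then there is a one-to-one correspondence between noncontextual ontological models $\xi_{\mathrm{nc}}:\mathsf{Op}\to\mathbf{SubStoch}$ of $\mathsf{Op}$ and ontological models $\widetilde\xi:\widetilde{\mathsf{Op}}\to\mathbf{SubStoch}$ of $\widetilde{\mathsf{Op}}$, given by $\widetilde\xi\mapsto\widetilde\xi\circ\sim$ (with inverse $\xi_{\mathrm{nc}}\mapsto$ the map $\widetilde T\mapsto\xi_{\mathrm{nc}}(T)$ for any representative $T$ of $\widetilde T$).
   Context: A process theory consists of systems (closed under a composition $A\otimes B$, with a trivial system $I$) and processes $T:A\to B$, closed under sequential composition $\circ$ and parallel composition $\otimes$ and containing identities; processes $I\to A$ are states (preparations), $A\to I$ effects, $I\to I$ closed diagrams. An operational theory is a process theory $\mathsf{Op}$ (whose processes are laboratory procedures) together with a probability rule $p$ assigning to each closed diagram $D$ a number $p(D)\in[0,1]$, with $p(D_1\otimes D_2)=p(D_1)p(D_2)$. A tester for type $A\to B$ is a triple $\tau=(s,e,W)$ of a system $W$, a process $s:I\to A\otimes W$ and a process $e:B\otimes W\to I$; write $\tau[T]:=e\circ(T\otimes\mathrm{id}_W)\circ s$. Processes $T,T':A\to B$ are operationally equivalent, $T\simeq T'$, iff $p(\tau[T])=p(\tau[T'])$ for all testers $\tau$. Standing assumptions: for any processes $T_2,T_3$ of the same type and $\omega\in[0,1]$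 there is a process $T_1$ (their mixture with weights $\omega,1-\omega$) with $p(\tau[T_1])=\omega p(\tau[T_2])+(1-\omega)p(\tau[T_3])$ for all testers $\tau$; if an effect $E_1$ is the coarse-graining of effects $E_2,E_3$ then $p(E_1\circ P)=p(E_2\circ P)+p(E_3\circ P)$ for all states $P$; all deterministic effects on a system (implement a measurement and ignore its outcome) are operationally equivalent; and (finite tomography) for each type $A\to B$ there are finitely many testers $\tau_1,\dots,\tau_m$ with $T\simeq T'$ iff $p(\tau_\alpha[T])=p(\tau_\alpha[T'])$ for all $\alpha$. The associated GPT $\widetilde{\mathsf{Op}}$ has the same systems, and its processes are the equivalence classes $\widetilde T$ of $\simeq$, composed via representatives ($\widetilde R\circ\widetilde T:=\widetilde{R\circ T}$, $\widetilde R\otimes\widetilde T:=\widetilde{R\otimes T}$); the quotient map $\sim$ is diagram-preserving, and closed diagrams are identified with their probabilities. Each $\widetilde T$ of type $A\to B$ is identified with the vector $(p(\tau_\alpha[T]))_\alpha\in\mathbb{R}^m$, which gives meaning to linear combinations of equivalence classes; if $T_1$ is a mixture of $T_2,T_3$ with weights $\omega,1-\omega$ then $\widetilde T_1=\omega\widetilde T_2+(1-\omega)\widetilde T_3$. The common class of deterministic effects on $A$ is denoted $u_A$. $\mathbf{SubStoch}$ is the process theory whose systems are spaces $\mathbb{R}^\Lambda$ of real functions on finite sets $\Lambda$ (with $\mathbb{R}^{\Lambda}\otimes\mathbb{R}^{\Lambda'}=\mathbb{R}^{\Lambda\times\Lambda'}$, trivial system $\mathbb{R}$), and whose processes are substochastic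 maps (linear maps with matrix $f(\lambda'|\lambda)\in[0,1]$, $\sum_{\lambda'}f(\lambda'|\lambda)\le1$), composed by composition and tensor product of maps; $\mathbf{1}_\Lambda$ denotes the all-ones covector $v\mapsto\sum_\lambda v(\lambda)$. A map $\xi$ from a process theory to $\mathbf{SubStoch}$ is diagram-preserving if it sends each system $A$ to some $\mathbb{R}^{\Lambda_A}$ with $A\otimes B\mapsto\mathbb{R}^{\Lambda_A}\otimes\mathbb{R}^{\Lambda_B}$, $I\mapsto\mathbb{R}$, and each process $A\to B$ to a substochastic map $\mathbb{R}^{\Lambda_A}\to\mathbb{R}^{\Lambda_B}$, preserving $\circ$, $\otimes$ and identities. An ontological model of $\mathsf{Op}$ is a diagram-preserving $\xi:\mathsf{Op}\to\mathbf{SubStoch}$ such that (1) every deterministic effect on $A$ is mapped to $\mathbf{1}_{\Lambda_A}$; (2) $\xi(D)=p(D)$ for every closed diagram $D$; (3) if $T_1$ is a mixture of $T_2,T_3$ with weights $\omega,1-\omega$ then $\xi(T_1)=\omega\xi(T_2)+(1-\omega)\xi(T_3)$, and if an effect is the coarse-graining of effects its image is the sum of their images. It is noncontextual if $T\simeq T'$ implies $\xi(T)=\xi(T')$. An ontological model of $\widetilde{\mathsf{Op}}$ is a diagram-preserving $\widetilde\xi:\widetilde{\mathsf{Op}}\to\mathbf{SubStoch}$ such that (1) $\widetilde\xi(u_A)=\mathbf{1}_{\Lambda_A}$; (2) $\widetilde\xi$ maps every closed diagram to its probability; (3) whenever $\widetilde T_1=\omega\widetilde T_2+(1-\omega)\widetilde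 T_3$ then $\widetilde\xi(\widetilde T_1)=\omega\widetilde\xi(\widetilde T_2)+(1-\omega)\widetilde\xi(\widetilde T_3)$, and likewise coarse-graining relations among effects are preserved. *)

From HB Require Import structures.
From mathcomp Require Import all_boot all_order all_algebra.
From mathcomp Require Import reals.
From Stdlib Require Import IndefiniteDescription.

Set Implicit Arguments.
Unset Strict Implicit.
Unset Printing Implicit Defensive.

Import Order.TTheory GRing.Theory Num.Theory.
Local Open Scope ring_scope.

Record ProcTheory := MkProcTheory {
  Sys : Type;
  unitS : Sys;
  tens : Sys -> Sys -> Sys;
  Proc : Sys -> Sys -> Type;
  comp : forall A B C : Sys, Proc B C -> Proc A B -> Proc A C;
  par : forall A B C D : Sys, Proc A B -> Proc C D -> Proc (tens A C) (tens B D);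
  idp : forall A : Sys, Proc A A }.

Arguments Proc : clear implicits.
Arguments tens : clear implicits.
Arguments unitS {p}.
Arguments comp {p A B C}.
Arguments par {p A B C D}.
Arguments idp {p}.

Record tester (P : ProcTheory) (A B : Sys P) := Tester {
  tW : Sys P;
  ts : Proc P unitS (tens P A tW);
  te : Proc P (tens P B tW) unitS }.

Definition apply_tester (P : ProcTheory) (A B : Sys P) (t : tester A B)
  (T : Proc P A B) : Proc P unitS unitS :=
  comp (te t) (comp (par T (idp (tW t))) (ts t)).

Definition opeq (P : ProcTheory) (X : Type) (p : Proc P unitS unitS -> X)
  (A B : Sys P) (T T' : Proc P A B) : Prop :=
  forall t : tester A B, p (apply_tester t T) = p (apply_tester t T').

Record OpTheory (R : realType) := MkOpTheory {
  OpPT :> ProcTheory;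
  tensIl : forall A : Sys OpPT, tens OpPT unitS A = A;
  tensIr : forall A : Sys OpPT, tens OpPT A unitS = A;
  tensA : forall A B C : Sys OpPT,
      tens OpPT (tens OpPT A B) C = tens OpPT A (tens OpPT B C);
  prob : Proc OpPT unitS unitS -> R;
  prob_range : forall D, 0 <= prob D <= 1;
  prob_mult : forall D1 D2 : Proc OpPT unitS unitS,
      prob (eq_rect _ (fun Z => Proc OpPT Z Z) (par D1 D2) _ (tensIl unitS))
      = prob D1 * prob D2;
  (* mix w T1 T2 T3 : T1 is the mixture of T2, T3 with weights w, 1 - w *)
  mix : forall A B : Sys OpPT,
      R -> Proc OpPT A B -> Proc OpPT A B -> Proc OpPT A B -> Prop;
  mix_ex : forall (A B : Sys OpPT) (w : R) (T2 T3 : Proc OpPT A B),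
      0 <= w <= 1 -> exists T1, mix w T1 T2 T3;
  mix_prob : forall (A B : Sys OpPT) (w : R) (T1 T2 T3 : Proc OpPT A B),
      mix w T1 T2 T3 ->
      0 <= w <= 1 /\
      forall t : tester A B, prob (apply_tester t T1)
        = w * prob (apply_tester t T2) + (1 - w) * prob (apply_tester t T3);
  (* cg E1 E2 E3 : effect E1 is the coarse-graining of effects E2, E3 *)
  cg : forall A : Sys OpPT,
      Proc OpPT A unitS -> Proc OpPT A unitS -> Proc OpPT A unitS -> Prop;
  cg_prob : forall (A : Sys OpPT) (E1 E2 E3 : Proc OpPT A unitS),
      cg E1 E2 E3 -> forall P : Proc OpPT unitS A,
      prob (comp E1 P) = prob (comp E2 P) + prob (comp E3 P);
  det : forall A : Sys OpPT, Proc OpPT A unitS -> Prop;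
  det_ex : forall A : Sys OpPT, exists E : Proc OpPT A unitS, det E;
  det_eq : forall (A : Sys OpPT) (E E' : Proc OpPT A unitS),
      det E -> det E' -> opeq prob E E';
  fidn : Sys OpPT -> Sys OpPT -> nat;
  fid : forall A B : Sys OpPT, 'I_(fidn A B) -> tester A B;
  fid_tomo : forall (A B : Sys OpPT) (T T' : Proc OpPT A B),
      opeq prob T T' <->
      (forall i, prob (apply_tester (fid i) T) = prob (apply_tester (fid i) T'));
  (* operational equivalence is a congruence (well-definedness of the GPT,
     guaranteed by the diagrammatic/monoidal structure of process theories) *)
  opeq_comp : forall (A B C : Sys OpPT) (S1 S2 : Proc OpPT B C) (T1 T2 : Proc OpPT A B),
      opeq prob S1 S2 -> opeq prob T1 T2 -> opeq prob (comp S1 T1) (comp S2 T2);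
  opeq_par : forall (A B C D : Sys OpPT) (f f' : Proc OpPT A B) (g g' : Proc OpPT C D),
      opeq prob f f' -> opeq prob g g' -> opeq prob (par f g) (par f' g') }.

Arguments prob {R o}.
Arguments mix {R o A B}.
Arguments cg {R o A}.
Arguments det {R o A}.
Arguments fid {R o A B}.
Arguments fidn {R} o.
Arguments det_ex {R} o A.

Section GPT.
Variables (R : realType) (Op : OpTheory R).

Definition cls (A B : Sys Op) (T : Proc Op A B) : Proc Op A B -> Prop :=
  fun X => opeq (@prob R Op) X T.

Definition GProc (A B : Sys Op) := {c : Proc Op A B -> Prop | exists T, c = cls T}.

Definition gcls (A B : Sys Op) (T : Proc Op A B) : GProc A B :=
  exist _ (cls T) (ex_intro _ T erefl).

Definition rep (A B : Sys Op) (c : GProc A B) : Proc Op A B :=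
  proj1_sig (constructive_indefinite_description _ (proj2_sig c)).

Definition GPT : ProcTheory :=
  @MkProcTheory (Sys Op) unitS (tens Op) GProc
    (fun A B C g f => gcls (comp (rep g) (rep f)))
    (fun A B C D f g => gcls (par (rep f) (rep g)))
    (fun A => gcls (idp A)).

Definition gvec (A B : Sys Op) (c : GProc A B) : 'rV[R]_(fidn Op A B) :=
  \row_i prob (apply_tester (fid i) (rep c)).

Definition u_ (A : Sys Op) : GProc A unitS :=
  gcls (proj1_sig (constructive_indefinite_description _ (det_ex Op A))).

End GPT.

(* A system A is sent to R^(Lam A) (Lam A a finite set); spl A B is the *)
(* identification of Lam (A (x) B) with Lam A * Lam B; a process        *)
(* T : A -> B is sent to the matrix xi T l' l = f(l'|l).                *)
Record DPMap (R : realType) (P : ProcTheory) := MkDPMap {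
  Lam : Sys P -> finType;
  spl : forall A B : Sys P, Lam (tens P A B) -> (Lam A * Lam B)%type;
  xi : forall A B : Sys P, Proc P A B -> Lam B -> Lam A -> R }.

Arguments Lam {R P}.
Arguments spl {R P} _ {A B}.
Arguments xi {R P} _ {A B}.

Definition diagram_preserving (R : realType) (P : ProcTheory) (M : DPMap R P) : Prop :=
  [/\ #|{: Lam M unitS}| = 1%N /\ (forall A B : Sys P, bijective (@spl _ _ M A B)),
      (forall (A B : Sys P) (T : Proc P A B),
          (forall y x, 0 <= xi M T y x <= 1) /\ (forall x, \sum_y xi M T y x <= 1)),
      (forall (A B C : Sys P) (g : Proc P B C) (f : Proc P A B) z x,
          xi M (comp g f) z x = \sum_y xi M g z y * xi M f y x),
      (forall (A : Sys P) y x, xi M (idp A) y x = (y == x)%:R) &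
      (forall (A B C D : Sys P) (f : Proc P A B) (g : Proc P C D) y x,
          xi M (par f g) y x
          = xi M f (spl M y).1 (spl M x).1 * xi M g (spl M y).2 (spl M x).2)].

Definition op_model (R : realType) (Op : OpTheory R) (M : DPMap R Op) : Prop :=
  [/\ diagram_preserving M,
      (forall (A : Sys Op) (E : Proc Op A unitS), det E -> forall x l, xi M E x l = 1),
      (forall (D : Proc Op unitS unitS) x y, xi M D x y = prob D),
      (forall (A B : Sys Op) (w : R) (T1 T2 T3 : Proc Op A B), mix w T1 T2 T3 ->
          forall y x, xi M T1 y x = w * xi M T2 y x + (1 - w) * xi M T3 y x) &
      (forall (A : Sys Op) (E1 E2 E3 : Proc Op A unitS), cg E1 E2 E3 ->
          forall y x, xi M E1 y x = xi M E2 y x + xi M E3 y x)].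

Definition noncontextual (R : realType) (Op : OpTheory R) (M : DPMap R Op) : Prop :=
  forall (A B : Sys Op) (T T' : Proc Op A B), opeq (@prob R Op) T T' -> xi M T = xi M T'.

Definition gpt_model (R : realType) (Op : OpTheory R) (M : DPMap R (GPT Op)) : Prop :=
  [/\ diagram_preserving M,
      (forall (A : Sys Op) x l, xi M (@u_ R Op A) x l = 1),
      (forall (D : Proc Op unitS unitS) x y, xi M (gcls D) x y = prob D),
      (forall (A B : Sys Op) (w : R) (c1 c2 c3 : @GProc R Op A B), 0 <= w <= 1 ->
          gvec c1 = w *: gvec c2 + (1 - w) *: gvec c3 ->
          forall y x, xi M c1 y x = w * xi M c2 y x + (1 - w) * xi M c3 y x) &
      (forall (A : Sys Op) (E1 E2 E3 : Proc Op A unitS), cg E1 E2 E3 ->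
          forall y x, xi M (gcls E1) y x = xi M (gcls E2) y x + xi M (gcls E3) y x)].

Definition precomp (R : realType) (Op : OpTheory R) (M : DPMap R (GPT Op))
  : DPMap R Op :=
  @MkDPMap R Op (Lam M) (@spl _ _ M) (fun A B T => xi M (gcls T)).

(* Noncontextuality of [xi] says exactly that [xi] is constant on operational
   equivalence classes, i.e. that it factors through the quotient map.  All the
   structure of the GPT (composition, parallel composition, the class of the
   deterministic effects, mixtures read off the tomography vectors) is the image
   of that of [Op] under the quotient map, so the ontological-model conditions
   transfer along the factorisation in both directions; uniqueness of the lift
   holds because the quotient map is surjective. *)
From Pilot Require Import Defs.
From HB Require Import structures.
From mathcomp Require Import all_boot all_order all_algebra.
From mathcomp Require Import reals.
From Stdlib Require Import IndefiniteDescription ProofIrrelevance.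
From Stdlib Require Import FunctionalExtensionality PropExtensionality.

Set Implicit Arguments.
Unset Strict Implicit.
Unset Printing Implicit Defensive.
Import Order.TTheory GRing.Theory Num.Theory.
Local Open Scope ring_scope.

Lemma DPMap_eq_xi (R : realType) (P : ProcTheory) (N : DPMap R P)
    (f : forall A B : Sys P, Proc P A B -> Lam N B -> Lam N A -> R) :
  (forall A B (T : Proc P A B), f A B T = xi N T) ->
  @MkDPMap R P (Lam N) (@spl _ _ N) f = N.
Proof.
move=> fE; case: N f fE => Lam spl xi f /= fE; congr MkDPMap.
by do 3!apply: functional_extensionality_dep => ?; apply: fE.
Qed.

Section Quotient.
Variables (R : realType) (Op : OpTheory R).

Local Notation opeq := (opeq (@prob R Op)).

Lemma opeq_sym A B (T T' : Proc Op A B) : opeq T T' -> opeq T' T.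
Proof. by move=> eqT t; rewrite eqT. Qed.

Lemma opeq_trans A B (T1 T2 T3 : Proc Op A B) :
  opeq T1 T2 -> opeq T2 T3 -> opeq T1 T3.
Proof. by move=> eq12 eq23 t; rewrite eq12 eq23. Qed.

Lemma GProc_eq A B (c1 c2 : @GProc R Op A B) : proj1_sig c1 = proj1_sig c2 -> c1 = c2.
Proof.
case: c1 c2 => [X1 h1] [X2 h2] /= eqX; subst X2.
by rewrite (proof_irrelevance _ h1 h2).
Qed.

Lemma gcls_eq A B (T T' : Proc Op A B) : opeq T T' -> gcls T = gcls T'.
Proof.
move=> eqT; apply: GProc_eq; apply: functional_extensionality => X.
apply: propositional_extensionality; rewrite /cls.
by split=> eqX; [apply: opeq_trans eqX eqT | apply: opeq_trans eqX (opeq_sym eqT)].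
Qed.

Lemma gcls_rep A B (c : @GProc R Op A B) : gcls (rep c) = c.
Proof.
apply: GProc_eq; rewrite /rep.
by case: constructive_indefinite_description => T /= ->.
Qed.

Lemma rep_gcls A B (T : Proc Op A B) : opeq (rep (gcls T)) T.
Proof.
rewrite /rep; case: constructive_indefinite_description => T' /= eqT.
by change (cls T T'); rewrite eqT.
Qed.

Lemma gcls_comp A B C (g : Proc Op B C) (f : Proc Op A B) :
  @Defs.comp (GPT Op) A B C (gcls g) (gcls f) = gcls (Defs.comp g f).
Proof. exact/gcls_eq/opeq_comp/rep_gcls/rep_gcls. Qed.

Lemma gcls_par A B C D (f : Proc Op A B) (g : Proc Op C D) :
  @par (GPT Op) A B C D (gcls f) (gcls g) = gcls (par f g).
Proof. exact/gcls_eq/opeq_par/rep_gcls/rep_gcls. Qed.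

Lemma gcls_det A (E : Proc Op A unitS) : det E -> gcls E = u_ A.
Proof.
rewrite /u_; case: constructive_indefinite_description => E' detE' detE.
exact/gcls_eq/det_eq.
Qed.

Lemma gvec_gcls A B (T : Proc Op A B) :
  gvec (gcls T) = \row_i prob (apply_tester (fid i) T).
Proof. by apply/rowP => i; rewrite !mxE rep_gcls. Qed.

Lemma gvec_inj A B : injective (@gvec R Op A B).
Proof.
move=> c1 c2 eqv; rewrite -(gcls_rep c1) -(gcls_rep c2).
apply/gcls_eq/fid_tomo => i.
by have := congr1 (fun v : 'rV_(fidn Op A B) => v ord0 i) eqv; rewrite !mxE.
Qed.

Lemma gvec_mix A B w (T1 T2 T3 : Proc Op A B) : mix w T1 T2 T3 ->
  gvec (gcls T1) = w *: gvec (gcls T2) + (1 - w) *: gvec (gcls T3).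
Proof.
case/mix_prob => _ probT1.
by apply/rowP => i; rewrite !gvec_gcls !mxE probT1.
Qed.

Lemma gcls_mix A B w (c1 c2 c3 : @GProc R Op A B) : 0 <= w <= 1 ->
  gvec c1 = w *: gvec c2 + (1 - w) *: gvec c3 ->
  exists T1, mix w T1 (rep c2) (rep c3) /\ c1 = gcls T1.
Proof.
move=> w01 eqv; have [T1 mixT1] := mix_ex (rep c2) (rep c3) w01.
exists T1; split=> //; apply: gvec_inj.
by rewrite (gvec_mix mixT1) !gcls_rep.
Qed.

End Quotient.

Section Correspondence.
Variables (R : realType) (Op : OpTheory R).

Definition lift (M : DPMap R Op) : DPMap R (GPT Op) :=
  @MkDPMap R (GPT Op) (Lam M) (@spl _ _ M) (fun A B c => xi M (rep c)).

Lemma precomp_noncontextual (M : DPMap R (GPT Op)) : noncontextual (precomp M).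
Proof. by move=> A B T T' /gcls_eq /= ->. Qed.

Lemma lift_precomp (M : DPMap R (GPT Op)) : lift (precomp M) = M.
Proof. by apply: DPMap_eq_xi => A B c /=; rewrite gcls_rep. Qed.

Section Noncontextual.
Variable M : DPMap R Op.
Hypothesis ncM : noncontextual M.

Lemma xi_rep_gcls A B (T : Proc Op A B) : xi M (rep (gcls T)) = xi M T.
Proof. exact/ncM/rep_gcls. Qed.

Lemma precomp_lift : precomp (lift M) = M.
Proof. exact/DPMap_eq_xi/xi_rep_gcls. Qed.

End Noncontextual.

Lemma precomp_diagram_preserving (M : DPMap R (GPT Op)) :
  diagram_preserving M -> diagram_preserving (precomp M).
Proof.
case=> unit_spl bounds xi_comp xi_id xi_par; split=> /=.
- exact: unit_spl.
- by move=> A B T; apply: bounds.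
- by move=> A B C g f z x; rewrite -gcls_comp xi_comp.
- exact: xi_id.
- by move=> A B C D f g y x; rewrite -gcls_par xi_par.
Qed.

Lemma precomp_model (M : DPMap R (GPT Op)) : gpt_model M -> op_model (precomp M).
Proof.
case=> dpM xi_u xi_closed xi_mix xi_cg; split=> /=.
- exact: precomp_diagram_preserving.
- by move=> A E /gcls_det ->.
- exact: xi_closed.
- move=> A B w T1 T2 T3 mixT; apply: xi_mix (gvec_mix mixT).
  by case: (mix_prob mixT).
- exact: xi_cg.
Qed.

Lemma lift_model (M : DPMap R Op) :
  op_model M -> noncontextual M -> gpt_model (lift M).
Proof.
case=> [[unit_spl bounds xi_comp xi_id xi_par] xi_det xi_closed xi_mix xi_cg] ncM.
have xiE := xi_rep_gcls ncM.
split=> /=.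
- split=> /=.
  + exact: unit_spl.
  + by move=> A B c; apply: bounds.
  + by move=> A B C g f z x; rewrite xiE xi_comp.
  + by move=> A y x; rewrite xiE xi_id.
  + by move=> A B C D f g y x; rewrite xiE xi_par.
- move=> A x l; rewrite /u_ xiE.
  by case: constructive_indefinite_description => E /= /xi_det ->.
- by move=> D x y; rewrite xiE xi_closed.
- move=> A B w c1 c2 c3 w01 /(gcls_mix w01) [T1 [mixT1 ->]] y x.
  by rewrite xiE (xi_mix _ _ _ _ _ _ mixT1).
- by move=> A E1 E2 E3 cgE y x; rewrite !xiE (xi_cg _ _ _ _ cgE).
Qed.

End Correspondence.

Theorem theorem2 (R : realType) (Op : OpTheory R) :
  (forall M : DPMap R (GPT Op),
      gpt_model M -> op_model (precomp M) /\ noncontextual (precomp M)) /\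
  (forall M : DPMap R Op,
      op_model M -> noncontextual M ->
      exists! M' : DPMap R (GPT Op), gpt_model M' /\ precomp M' = M).
Proof.
split=> [M modelM | M modelM ncM].
  by split; [apply: precomp_model | apply: precomp_noncontextual].
exists (lift M); split; first by split; [apply: lift_model | apply: precomp_lift].
by move=> M' [_ <-]; rewrite lift_precomp.
Qed.
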